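(* Let $M_1=(E,r_1)$ and $M_2=(E,r_2)$ be demi-matroids on the same finite ground set $E$ such that $r_2(X)\le r_1(X)$ for all $X\subseteq E$. Define $\rho(X)=r_1(X)-r_2(X)$ for $X\subseteq E$. Then $(E,\rho)$ is a demi-matroid if and only if $\mathcal{E}_{M_1}\subseteq \mathcal{E}_{M_2}$.
   Context: A demi-matroid is a pair $(E,r)$ with $E$ a finite set and $r:2^E\to\mathbb{N}$ satisfying (R1) $r(\emptyset)=0$ and (R2) for every $X\subseteq E$ and $x\in E$, $r(X)\le r(X\cup\{x\})\le r(X)+1$. For a demi-matroid $M=(E,r)$, $\mathcal{E}_M=\{(X,x): X\subseteq E,\ x\in X,\ r(X\setminus\{x\})=r(X)\}$. *)

From mathcomp Require Import all_boot.
Set Implicit Arguments. Unset Strict Implicit. Unset Printing Implicit Defensive.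

Definition demi_matroid (E : finType) (r : {set E} -> nat) : Prop :=
  r set0 = 0 /\
  (forall (X : {set E}) (x : E), r X <= r (x |: X) <= (r X).+1).

Definition calE (E : finType) (r : {set E} -> nat) : {set {set E} * E} :=
  [set p : {set E} * E | (p.2 \in p.1) && (r (p.1 :\ p.2) == r p.1)].

From mathcomp Require Import all_boot.
From mathcomp Require Import zify.

(* Adding an element x to X raises each of r1, r2 by 0 or 1, so rho rises
   by at most 1, and rho decreases exactly when r2 rises while r1 does not.
   The condition E_{M1} ⊆ E_{M2} says precisely that r1 (X + x) = r1 X forces
   r2 (X + x) = r2 X, i.e. that the decrease never happens. *)

Lemma calE_setU1 (E : finType) (r : {set E} -> nat) (X : {set E}) (x : E) :
  x \notin X -> ((x |: X, x) \in calE r) = (r (x |: X) == r X).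
Proof. by move=> xX; rewrite inE /= setU11 setU1K // eq_sym. Qed.

Definition stalls_with {E : finType} (r1 r2 : {set E} -> nat) : Prop :=
  forall (X : {set E}) (x : E),
    x \notin X -> r1 (x |: X) = r1 X -> r2 (x |: X) = r2 X.

Lemma subset_calEP (E : finType) (r1 r2 : {set E} -> nat) :
  reflect (stalls_with r1 r2) (calE r1 \subset calE r2).
Proof.
apply: (iffP subsetP) => [sub X x xX /eqP e1 | sub [Y x]].
  by apply/eqP; rewrite -calE_setU1 // sub // calE_setU1.
rewrite !inE /= => /andP [xY /eqP e1]; rewrite xY /=.
have xY' : x \notin Y :\ x by rewrite setD11.
by apply/eqP; have := sub _ _ xY'; rewrite setD1K // => ->.
Qed.

Section RankDifference.

Variables (E : finType) (r1 r2 : {set E} -> nat).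
Hypotheses (h1 : demi_matroid r1) (h2 : demi_matroid r2).
Hypothesis hle : forall X : {set E}, r2 X <= r1 X.

Let rho (X : {set E}) := r1 X - r2 X.

Lemma rank_diff_demi_matroid : stalls_with r1 r2 -> demi_matroid rho.
Proof.
case: h1 h2 => [r10 r1S] [r20 r2S] stall.
split=> [|X x]; first by rewrite /rho r10 r20.
have [xX | xX] := boolP (x \in X).
  by rewrite (setUidPr _) ?sub1set // leqnn leqnSn.
have := r1S X x; have := r2S X x; have := hle X; have := hle (x |: X).
rewrite /rho; case: (eqVneq (r1 (x |: X)) (r1 X)) => [e1|]; last lia.
by move: (stall X x xX e1); lia.
Qed.

Lemma demi_matroid_rank_diff_stalls : demi_matroid rho -> stalls_with r1 r2.
Proof.
case=> _ rhoS X x _ e1.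
have := rhoS X x; have := h2.2 X x; have := hle X; have := hle (x |: X).
rewrite /rho e1; lia.
Qed.

End RankDifference.

Theorem mainTheorem1 (E : finType) (r1 r2 : {set E} -> nat)
  (h1 : demi_matroid r1) (h2 : demi_matroid r2)
  (hle : forall X : {set E}, r2 X <= r1 X) :
  demi_matroid (fun X => r1 X - r2 X) <-> calE r1 \subset calE r2.
Proof.
split=> [rho_dm | /subset_calEP stall].
  by apply/subset_calEP; exact: demi_matroid_rank_diff_stalls.
exact: rank_diff_demi_matroid.
Qed.
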